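(* Let $x=[a_0,a_1,a_2,\ldots]\in\mathbb{R}\setminus\mathbb{Q}$ with convergents $s_k/t_k$, and let $k\ge 0$ be such that $t_k$ and $t_{k+1}$ are both odd. Then $$\left(\frac{s_k}{t_k}\right)=\left(\frac{s_{k+1}}{t_{k+1}}\right),$$ except when either ($t_k\equiv 1\pmod 4$, $t_{k+1}\equiv 3\pmod 4$ and $k$ is odd) or ($t_k\equiv 3\pmod 4$, $t_{k+1}\equiv 1\pmod 4$ and $k$ is even); in these two exceptional cases $$\left(\frac{s_k}{t_k}\right)=-\left(\frac{s_{k+1}}{t_{k+1}}\right).$$
   Context: For $x\in\mathbb{R}\setminus\mathbb{Q}$ with regular continued fraction expansion $x=[a_0,a_1,a_2,\ldots]$ ($a_0\in\mathbb{Z}$, $a_i\ge1$ for $i\ge1$), the convergents $s_k/t_k$ are defined by $s_{-1}=1$, $s_0=a_0$, $s_k=a_ks_{k-1}+s_{k-2}$ and $t_{-1}=0$, $t_0=1$, $t_k=a_kt_{k-1}+t_{k-2}$ for $k\ge1$. For an odd natural number $n$ and an integer $m$ coprime to $n$, $\left(\frac{m}{n}\right)$ denotes the Jacobi symbol (equal to $1$ if $n=1$). *)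

From mathcomp Require Import all_boot all_order all_algebra.
Set Implicit Arguments. Unset Strict Implicit. Unset Printing Implicit Defensive.
Import Order.TTheory GRing.Theory Num.Theory.
Local Open Scope ring_scope.

(* Convergent recursion: cf_pair a init k = (u_k, u_(k-1)) where
   u_(-1) = init.2 ... more precisely u_0 = init.1, u_(-1) = init.2,
   u_k = a_k u_(k-1) + u_(k-2). *)
Fixpoint cf_pair (a : nat -> int) (init : int * int) (k : nat) : int * int :=
  match k with
  | 0%N => init
  | k'.+1 => let p := cf_pair a init k' in (a k'.+1 * p.1 + p.2, p.1)
  end.

Definition cf_s (a : nat -> int) (k : nat) : int := (cf_pair a (a 0%N, 1) k).1.
Definition cf_t (a : nat -> int) (k : nat) : int := (cf_pair a (1, 0) k).1.

Definition legendre (m : int) (p : nat) : int :=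
  if (p %| m)%Z then 0
  else if [exists x : 'I_p, (p %| (x%:Z ^+ 2 - m))%Z] then 1 else -1.

Definition jacobi (m : int) (n : nat) : int :=
  \prod_(p <- primes n) legendre m p ^+ logn p n.

(* The determinant identity s_(k+1) t_k - s_k t_(k+1) = (-1)^k gives
   s_k t_(k+1) = -(-1)^k modulo t_k and s_(k+1) t_k = (-1)^k modulo t_(k+1).
   Hence the two Jacobi symbols differ by (t_(k+1)/t_k) (t_k/t_(k+1)) and by
   symbols of 1 or -1, which Jacobi reciprocity and the supplementary law for -1
   evaluate from t_k, t_(k+1) mod 4 and the parity of k. *)

From mathcomp Require Import all_boot all_order all_algebra all_field.
From mathcomp Require Import zify ring.
Set Implicit Arguments. Unset Strict Implicit. Unset Printing Implicit Defensive.
Import Order.TTheory GRing.Theory Num.Theory.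
Local Open Scope ring_scope.

Lemma odd_halfE n : odd n -> n = (n./2 * 2).+1.
Proof. by move=> n_odd; rewrite -[in LHS](odd_double_half n) n_odd -muln2. Qed.

Definition trit (x : int) := [|| x == 0, x == 1 | x == -1].

Lemma trit_sign n : trit ((-1) ^+ n).
Proof. by rewrite -signr_odd; case: odd. Qed.

Lemma tritM x y : trit x -> trit y -> trit (x * y).
Proof. by move=> /or3P[]/eqP-> /or3P[]/eqP->. Qed.

Section Legendre.

Variable p : nat.
Hypotheses (p_prime : prime p) (p_odd : odd p).
Local Notation F := 'F_p.
Local Notation P := p./2.
Let pcharF : p \in [pchar F] := pchar_Fp p_prime.
Let p_eq : p = (P * 2).+1 := odd_halfE p_odd.

Lemma half_prime_gt0 : (0 < P)%N.
Proof. by have := prime_gt1 p_prime; rewrite p_eq; case: (P). Qed.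

Definition is_square (c : F) := [exists y : F, y ^+ 2 == c].

Lemma legendreE m :
  legendre m p = if m%:~R == 0 :> F then 0 else if is_square m%:~R then 1 else -1.
Proof.
rewrite /legendre (dvdz_pcharf pcharF); case: ifP => // _.
congr (if _ then _ else _); apply/existsP/existsP => [[x] | [y /eqP y2m]].
  rewrite (dvdz_pcharf pcharF) rmorphB rmorphXn /= subr_eq0 => x2m.
  by exists (x%:R); rewrite -[x%:R]/((x : int)%:~R).
have y_lt_p : (val y < p)%N by apply: leq_trans (ltn_ord y) _; rewrite Fp_cast.
exists (Ordinal y_lt_p); rewrite (dvdz_pcharf pcharF) rmorphB rmorphXn /= subr_eq0.
by rewrite -[(Posz _)%:~R]/((val y)%:R) natr_Zp y2m.
Qed.

Lemma Fp_nat_neq0 i : (0 < i < p)%N -> (i%:R : F) != 0.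
Proof.
move=> /andP[i_gt0 i_lt_p]; rewrite -(dvdn_pcharf pcharF).
by apply/negP => /(dvdn_leq i_gt0); rewrite leqNgt i_lt_p.
Qed.

Lemma Fp_sqr_nat_inj i j : (0 < i <= P)%N -> (0 < j <= P)%N ->
  (i%:R : F) ^+ 2 = (j%:R) ^+ 2 -> i = j.
Proof.
move=> hi hj /eqP; rewrite -subr_eq0 subr_sqr mulf_eq0 => /orP[].
  rewrite subr_eq0 => /eqP /(congr1 (@nat_of_ord _)).
  by rewrite !(val_Fp_nat p_prime) !modn_small; lia.
by rewrite -natrD -(dvdn_pcharf pcharF) => /dvdn_leq; lia.
Qed.

Lemma Fp_expf_pred (x : F) : x != 0 -> x ^+ (P * 2) = 1.
Proof.
move=> x_neq0; apply: (mulfI x_neq0); rewrite mulr1 -exprS -p_eq.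
by have := expf_card x; rewrite (card_Fp p_prime).
Qed.

(* [c] and the [P] nonzero squares would be [P + 1] distinct roots of ['X^P - 1]. *)
Lemma nonsquare_expf_half (c : F) : c != 0 -> ~~ is_square c -> c ^+ P = -1.
Proof.
move=> c_neq0 c_nsq.
have : (c ^+ P) ^+ 2 == 1 by rewrite -exprM Fp_expf_pred.
rewrite sqrf_eq1 => /orP[/eqP cP1 | /eqP //]; exfalso.
pose rs := c :: [seq (i%:R : F) ^+ 2 | i <- iota 1 P].
have XP1_neq0 : ('X^P - 1 : {poly F}) != 0.
  by rewrite -size_poly_eq0 size_XnsubC ?half_prime_gt0.
have := max_poly_roots XP1_neq0 (rs := rs).
rewrite size_XnsubC ?half_prime_gt0 // /rs /= size_map size_iota ltnn.
suff [rs_roots rs_uniq] : all (root ('X^P - 1)) rs /\ uniq rs.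
  by move/(_ rs_roots rs_uniq).
split.
  rewrite /= rootE !hornerE cP1 subrr eqxx /=.
  apply/allP => z /mapP[i]; rewrite mem_iota => hi ->.
  rewrite rootE !hornerE -exprM mulnC Fp_expf_pred ?subrr //.
  by apply: Fp_nat_neq0; lia.
rewrite /= map_inj_in_uniq ?iota_uniq ?andbT.
  apply/mapP => -[i _ ci]; case/negP: c_nsq.
  by apply/existsP; exists i%:R; rewrite ci.
by move=> i j; rewrite !mem_iota => hi hj; apply: Fp_sqr_nat_inj; lia.
Qed.

Lemma euler_criterion (c : F) : c != 0 -> c ^+ P = if is_square c then 1 else -1.
Proof.
case: ifP => [/existsP[y /eqP <-] | /negbT c_nsq c_neq0]; last first.
  exact: nonsquare_expf_half.
by rewrite expf_eq0 /= -exprM mulnC => /Fp_expf_pred.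
Qed.

Lemma legendre_Fp m : (legendre m p)%:~R = (m%:~R : F) ^+ P.
Proof.
rewrite legendreE; case: ifP => [/eqP -> | /negbT m_neq0].
  by rewrite expr0n gtn_eqF ?half_prime_gt0.
by rewrite euler_criterion //; case: ifP.
Qed.

Lemma trit_legendre m : trit (legendre m p).
Proof. by rewrite /legendre; case: ifP => //; case: ifP. Qed.

(* [0], [1] and [-1] are distinct modulo [p > 2]. *)
Lemma trit_Fp_inj x y : trit x -> trit y -> x%:~R = y%:~R :> F -> x = y.
Proof.
move=> tx ty /eqP; rewrite -subr_eq0 -rmorphB -(dvdz_pcharf pcharF) dvdzE /=.
have xy_le2 : (`|x - y| <= 2)%N by move: tx ty => /or3P[]/eqP-> /or3P[]/eqP->.
move=> p_dvd; apply/eqP; rewrite -subr_eq0 -absz_eq0; apply/eqP.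
case: (posnP `|x - y|) => // xy_gt0; have := dvdn_leq xy_gt0 p_dvd.
by have := prime_gt1 p_prime; rewrite p_eq; lia.
Qed.

Lemma legendre_sign_Fp m n : (m%:~R : F) ^+ P = (-1) ^+ n -> legendre m p = (-1) ^+ n.
Proof.
move=> mP; apply: trit_Fp_inj; rewrite ?trit_legendre ?trit_sign //.
by rewrite legendre_Fp mP rmorphXn /= rmorphN1.
Qed.

Lemma legendreM m n : legendre (m * n) p = legendre m p * legendre n p.
Proof.
apply: trit_Fp_inj; rewrite ?tritM ?trit_legendre //.
by rewrite rmorphM /= !legendre_Fp rmorphM exprMn.
Qed.

Lemma legendre_eqmod m n : (p %| m - n)%Z -> legendre m p = legendre n p.
Proof.
rewrite (dvdz_pcharf pcharF) rmorphB subr_eq0 /= => /eqP mn.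
by apply: trit_Fp_inj; rewrite ?trit_legendre // !legendre_Fp mn.
Qed.

Lemma legendre1 : legendre 1 p = 1.
Proof. by apply: (@legendre_sign_Fp 1 0); rewrite rmorph1 expr1n. Qed.

Lemma legendreN1 : legendre (-1) p = (-1) ^+ P.
Proof. by apply: legendre_sign_Fp; rewrite rmorphN1. Qed.

Lemma legendre_sqr m : ~~ (p %| m)%Z -> legendre m p ^+ 2 = 1.
Proof. by rewrite /legendre => /negPf ->; case: ifP; rewrite ?sqrrN expr1n. Qed.

Section Gauss.

Variable q : nat.
Hypotheses (p_ndvd_q : ~~ (p %| q)%N) (q_odd : odd q).

Let I := index_iota 1 P.+1.
Let r k := (q * k %% p)%N.
Let neg_res k := (P < r k)%N.
Let abs_res k := if neg_res k then (p - r k)%N else r k.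

Let memI k : (k \in I) = (0 < k <= P)%N.
Proof. by rewrite mem_index_iota. Qed.

Let r_bounds k : k \in I -> (0 < r k < p)%N.
Proof.
rewrite memI => hk; rewrite ltn_pmod ?andbT; last by rewrite p_eq.
rewrite lt0n -[_ == 0]/(p %| q * k)%N Euclid_dvdM // (negPf p_ndvd_q) /=.
by apply/negP => /dvdn_leq; lia.
Qed.

Let abs_res_mem k : k \in I -> abs_res k \in I.
Proof.
move=> kI; have := r_bounds kI; rewrite memI /abs_res /neg_res.
by have := p_eq; case: (ltnP P (r k)); lia.
Qed.

Let abs_res_Fp k : k \in I -> ((abs_res k)%:R : F) = (-1) ^+ (neg_res k) * q%:R * k%:R.
Proof.
move=> kI; rewrite -mulrA -natrM.
have -> : ((q * k)%:R : F) = (r k)%:R by rewrite (Fp_nat_mod p_prime).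
rewrite /abs_res; case: (neg_res k) => /=; rewrite ?expr0 ?expr1 ?mul1r //.
rewrite mulN1r natrB; last by have := r_bounds kI; lia.
by rewrite (pchar_Fp_0 p_prime) sub0r.
Qed.

Let abs_res_perm : perm_eq (map abs_res I) I.
Proof.
have abs_res_inj : {in I &, injective abs_res}.
  move=> i j iI jI ij_eq; apply: Fp_sqr_nat_inj; rewrite -?memI //.
  have : ((abs_res i)%:R : F) ^+ 2 = (abs_res j)%:R ^+ 2 by rewrite ij_eq.
  rewrite !abs_res_Fp // -!mulrA !exprMn !sqrr_sign !mul1r; apply: mulfI.
  by rewrite expf_neq0 // -(dvdn_pcharf pcharF).
have abs_res_uniq : uniq (map abs_res I) by rewrite map_inj_in_uniq ?iota_uniq.
apply: uniq_perm; rewrite ?iota_uniq //.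
have [] // := uniq_min_size abs_res_uniq (s2 := I); last by rewrite size_map.
by move=> _ /mapP[k kI ->]; apply: abs_res_mem.
Qed.

Lemma gauss_lemma : (q%:R : F) ^+ P = (-1) ^+ (\sum_(k <- I) neg_res k)%N.
Proof.
have prod_eq : \prod_(k <- I) (k%:R : F) =
    \prod_(k <- I) ((-1) ^+ (neg_res k) * q%:R * k%:R).
  by rewrite -(perm_big _ abs_res_perm) big_map; apply: eq_big_seq => k /abs_res_Fp.
rewrite !big_split /= prodr_const_nat subn1 /= in prod_eq.
rewrite -(big_morph _ (exprD _) (expr0 _)) in prod_eq.
have prod_neq0 : \prod_(k <- I) (k%:R : F) != 0.
  rewrite prodf_seq_neq0; apply/allP => k; rewrite memI /= => hk.
  by apply: Fp_nat_neq0; lia.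
rewrite -[RHS]mulr1; apply: (canRL (signrMK _)); apply: (mulIf prod_neq0).
by rewrite mul1r -prod_eq.
Qed.

(* Sum [q k = p (q k / p) + r k] over [I] modulo 2: [r k] and [abs_res k] differ
   by the odd [p] exactly when [neg_res k], and [abs_res] permutes [I]. *)
Lemma eisenstein_parity :
  odd (\sum_(k <- I) neg_res k) = odd (\sum_(k <- I) (q * k %/ p)).
Proof.
have div_sum : (\sum_(k <- I) q * k =
    (\sum_(k <- I) (q * k %/ p)) * p + \sum_(k <- I) r k)%N.
  by rewrite big_distrl /= -big_split /=; apply: eq_bigr => k _; rewrite -divn_eq.
have fold_sum : (\sum_(k <- I) r k + 2 * \sum_(k <- I) (neg_res k * abs_res k) =
           \sum_(k <- I) abs_res k + p * \sum_(k <- I) neg_res k)%N.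
  rewrite !big_distrr -!big_split /=; apply: eq_big_seq => k kI.
  by have := r_bounds kI; rewrite /abs_res; case: (neg_res k) => /=; lia.
have abs_res_sum : (\sum_(k <- I) abs_res k = \sum_(k <- I) k)%N.
  by rewrite -[in RHS](perm_big _ abs_res_perm) big_map.
move/(congr1 odd): div_sum; move/(congr1 odd): fold_sum.
rewrite abs_res_sum -big_distrr !oddD !oddM /= q_odd p_odd /= !andbT.
move: (odd (\sum_(k <- I) r k)) (odd (\sum_(k <- I) (neg_res k * abs_res k)%N)).
move: (odd (\sum_(k <- I) k)) (odd (\sum_(k <- I) neg_res k)).
move: (odd (\sum_(k <- I) (q * k %/ p))).
by do 5!case.
Qed.

Lemma legendre_gauss :
  legendre q p = (-1) ^+ (\sum_(1 <= k < P.+1) (q * k %/ p))%N.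
Proof.
apply: legendre_sign_Fp; rewrite gauss_lemma -signr_odd eisenstein_parity.
by rewrite signr_odd.
Qed.

End Gauss.

End Legendre.

Lemma sum_mul_leq (c d Q : nat) : (0 < d)%N ->
  (\sum_(1 <= j < Q.+1) (d * j <= c) = minn Q (c %/ d))%N.
Proof.
move=> d_gt0; elim: Q => [|Q IHQ]; first by rewrite min0n big_geq.
rewrite big_nat_recr //= IHQ mulnC -leq_divRL //.
by case: leqP; lia.
Qed.

(* Both sums count the lattice points of the rectangle [1, p/2] x [1, q/2] lying
   on either side of the diagonal [p y = q x], which contains none of them. *)
Lemma sum_floor_reciprocity (p q : nat) :
  prime p -> prime q -> odd p -> odd q -> p != q ->
  (\sum_(1 <= k < (p./2).+1) (q * k %/ p) + \sum_(1 <= j < (q./2).+1) (p * j %/ q)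
   = p./2 * q./2)%N.
Proof.
move=> p_prime q_prime p_odd q_odd p_neq_q.
have := odd_halfE p_odd; have := odd_halfE q_odd.
set P := p./2; set Q := q./2 => q_eq p_eq.
have floor_count (m n M N : nat) : (0 < m)%N -> n = (N * 2).+1 -> m = (M * 2).+1 ->
    (\sum_(1 <= k < M.+1) (n * k %/ m) =
     \sum_(1 <= k < M.+1) \sum_(1 <= j < N.+1) (m * j <= n * k))%N.
  move=> m_gt0 n_eq m_eq; apply: eq_big_seq => k; rewrite mem_index_iota => hk.
  rewrite sum_mul_leq //; apply/esym/minn_idPr.
  by rewrite -ltnS ltn_divLR //; nia.
rewrite (floor_count p q P Q) ?(floor_count q p Q P) ?prime_gt0 //.
rewrite [X in (_ + X)%N]exchange_big -big_split /=.
have -> : (P * Q = (P.+1 - 1) * ((Q.+1 - 1) * 1))%N by rewrite !subn1 muln1.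
rewrite -sum_nat_const_nat; apply: eq_big_seq => k; rewrite mem_index_iota => hk.
rewrite -sum_nat_const_nat -big_split /=.
apply: eq_big_seq => j; rewrite mem_index_iota => hj.
have pj_neq_qk : (p * j != q * k)%N.
  apply/eqP => pj_qk; have : (p %| q * k)%N by rewrite -pj_qk dvdn_mulr.
  rewrite Euclid_dvdM // dvdn_prime2 // (negPf p_neq_q) => /dvdn_leq; lia.
by case: ltngtP pj_neq_qk.
Qed.

Lemma legendre_reciprocity (p q : nat) : prime p -> prime q -> odd p -> odd q -> p != q ->
  legendre q p * legendre p q = (-1) ^+ (p./2 * q./2)%N.
Proof.
move=> p_prime q_prime p_odd q_odd p_neq_q.
rewrite !legendre_gauss ?dvdn_prime2 // 1?eq_sym //.
by rewrite -exprD sum_floor_reciprocity.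
Qed.

Lemma jacobi_den1 m : jacobi m 1 = 1.
Proof. by rewrite /jacobi big_nil. Qed.

Lemma jacobi_prime m p : prime p -> jacobi m p = legendre m p.
Proof.
by move=> p_prime; rewrite /jacobi primes_prime // big_seq1 logn_prime // eqxx.
Qed.

Lemma jacobi_iota m n N : (0 < n)%N -> (n < N)%N ->
  jacobi m n = \prod_(p <- iota 0 N | prime p) legendre m p ^+ logn p n.
Proof.
move=> n_gt0 n_lt_N.
have -> : \prod_(p <- iota 0 N | prime p) legendre m p ^+ logn p n =
          \prod_(p <- iota 0 N | p \in primes n) legendre m p ^+ logn p n.
  rewrite big_mkcond [RHS]big_mkcond /=; apply: eq_bigr => p _.
  rewrite mem_primes n_gt0 /=; case p_prime: (prime p) => //=.
  by case: ifP => // p_ndvd; rewrite logn_coprime ?prime_coprime ?p_ndvd.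
rewrite -big_filter /jacobi; apply/perm_big/uniq_perm.
- exact: primes_uniq.
- by rewrite filter_uniq ?iota_uniq.
move=> p; rewrite mem_filter mem_iota /= add0n; case pn: (p \in primes n) => //=.
by move: pn; rewrite mem_primes => /and3P[_ _ /dvdn_leq] => /(_ n_gt0); lia.
Qed.

Lemma jacobi_denM m a b : (0 < a)%N -> (0 < b)%N ->
  jacobi m (a * b)%N = jacobi m a * jacobi m b.
Proof.
move=> a_gt0 b_gt0; have ab_gt0 : (0 < a * b)%N by rewrite muln_gt0 a_gt0.
rewrite !(@jacobi_iota m _ (a * b)%N.+1) // ?ltnS ?leq_pmulr ?leq_pmull //.
by rewrite -big_split; apply: eq_bigr => p _; rewrite lognM // exprD.
Qed.

Lemma odd_prime_ind (Pr : nat -> Prop) :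
  Pr 1%N -> (forall p, prime p -> odd p -> Pr p) ->
  (forall a b, odd a -> odd b -> Pr a -> Pr b -> Pr (a * b)%N) ->
  forall n, odd n -> Pr n.
Proof.
move=> Pr1 Pr_prime PrM n; elim: n {-2}n (leqnn n) => [|N IHN] n.
  by rewrite leqn0 => /eqP ->.
move=> n_le_N n_odd; case: (ltngtP n 1) => [|n_gt1|-> //].
  by rewrite ltnS leqn0 => /eqP n0; rewrite n0 in n_odd.
have pdiv_n_prime := pdiv_prime n_gt1.
rewrite -(divnK (pdiv_dvd n)) mulnC oddM in n_odd *.
case/andP: n_odd => pdiv_odd quot_odd.
apply: PrM => //; first exact: Pr_prime.
apply: IHN => //; rewrite -ltnS; apply: leq_trans n_le_N.
rewrite ltn_divLR ?pdiv_gt0 // -[X in (X < _)%N]muln1 ltn_pmul2l; last lia.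
exact: prime_gt1.
Qed.

Lemma mem_primes_odd n p : odd n -> p \in primes n -> prime p /\ odd p.
Proof.
move=> n_odd; rewrite mem_primes => /and3P[p_prime _ p_dvd]; split => //.
case: (even_prime p_prime) => // p2; move: p_dvd; rewrite p2 dvdn2.
by rewrite n_odd.
Qed.

Lemma jacobi_numM x y n : odd n -> jacobi (x * y) n = jacobi x n * jacobi y n.
Proof.
move=> n_odd; rewrite /jacobi -big_split; apply: eq_big_seq => p pn.
by have [p_prime p_odd] := mem_primes_odd n_odd pn; rewrite legendreM // exprMn.
Qed.

Lemma jacobi_eqmod x y n : odd n -> (n %| x - y)%Z -> jacobi x n = jacobi y n.
Proof.
move=> n_odd n_dvd; rewrite /jacobi; apply: eq_big_seq => p pn.
have [p_prime p_odd] := mem_primes_odd n_odd pn.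
move: pn; rewrite mem_primes => /and3P[_ _ p_dvd].
congr (_ ^+ _); apply: legendre_eqmod => //.
by apply: dvdz_trans n_dvd; rewrite dvdzE.
Qed.

Lemma jacobi_num1 n : odd n -> jacobi 1 n = 1.
Proof.
move=> n_odd; rewrite /jacobi big_seq big1 // => p /(mem_primes_odd n_odd)[].
by move=> p_prime p_odd; rewrite legendre1 ?expr1n.
Qed.

Lemma jacobi_sqr m n : odd n -> coprime `|m| n -> jacobi m n ^+ 2 = 1.
Proof.
move=> n_odd mn_coprime; rewrite /jacobi -prodrXl big_seq big1 // => p pn.
have [p_prime p_odd] := mem_primes_odd n_odd pn.
move: pn; rewrite mem_primes => /and3P[_ _ p_dvd].
rewrite -exprM mulnC exprM legendre_sqr ?expr1n // dvdzE /=; apply/negP => p_dvd_m.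
have : (p %| gcdn `|m| n)%N by rewrite dvdn_gcd p_dvd_m.
by rewrite (eqP mn_coprime) dvdn1 => /eqP p1; move: (prime_gt1 p_prime); rewrite p1.
Qed.

Lemma half_oddM a b : odd a -> odd b ->
  ((a * b)./2 = (a./2 * b./2).*2 + a./2 + b./2)%N.
Proof.
move=> /odd_halfE a_eq /odd_halfE b_eq.
rewrite {1}a_eq {1}b_eq -divn2.
have -> : ((a./2 * 2).+1 * (b./2 * 2).+1 =
           (a./2 * b./2 * 2 + a./2 + b./2) * 2 + 1)%N by ring.
by rewrite divnMDl // -muln2; lia.
Qed.

Lemma sign_half_oddM (M a b : nat) : odd a -> odd b ->
  (-1) ^+ (M * (a * b)./2)%N = (-1) ^+ (M * a./2)%N * (-1) ^+ (M * b./2)%N :> int.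
Proof.
move=> a_odd b_odd; rewrite half_oddM // -exprD -!mulnDr.
rewrite -signr_odd -[in RHS]signr_odd; congr (_ ^+ (nat_of_bool _)).
by rewrite !oddM !oddD odd_double.
Qed.

Lemma jacobi_numN1 n : odd n -> jacobi (-1) n = (-1) ^+ (n./2).
Proof.
move: n; apply: odd_prime_ind; first by rewrite jacobi_den1.
  by move=> p p_prime p_odd; rewrite jacobi_prime // legendreN1.
move=> a b a_odd b_odd IHa IHb; rewrite jacobi_denM ?odd_gt0 // IHa IHb.
by have := sign_half_oddM 1 a_odd b_odd; rewrite !mul1n.
Qed.

Definition jacobi_reciprocal (m n : nat) :=
  jacobi m n * jacobi n m = (-1) ^+ (m./2 * n./2)%N.

Lemma jacobi_reciprocal_sym m n :
  jacobi_reciprocal m n -> jacobi_reciprocal n m.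
Proof. by rewrite /jacobi_reciprocal mulrC mulnC. Qed.

Lemma jacobi_reciprocal1 m : odd m -> jacobi_reciprocal m 1.
Proof.
by move=> m_odd; rewrite /jacobi_reciprocal jacobi_den1 jacobi_num1 // muln0 mulr1.
Qed.

Lemma jacobi_reciprocalM m a b : odd m -> odd a -> odd b ->
  jacobi_reciprocal m a -> jacobi_reciprocal m b -> jacobi_reciprocal m (a * b)%N.
Proof.
move=> m_odd a_odd b_odd ma mb; rewrite /jacobi_reciprocal.
rewrite jacobi_denM ?odd_gt0 // PoszM jacobi_numM // sign_half_oddM // -ma -mb.
by ring.
Qed.

Lemma jacobi_reciprocal_prime q : prime q -> odd q ->
  forall m, odd m -> coprime m q -> jacobi_reciprocal m q.
Proof.
move=> q_prime q_odd; apply: odd_prime_ind.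
- by move=> _; apply/jacobi_reciprocal_sym/jacobi_reciprocal1.
- move=> p p_prime p_odd pq_coprime.
  have p_neq_q : p != q.
    apply: contraTneq pq_coprime => ->; rewrite /coprime gcdnn.
    by rewrite gtn_eqF ?prime_gt1.
  by rewrite /jacobi_reciprocal !jacobi_prime // mulrC legendre_reciprocity.
move=> a b a_odd b_odd IHa IHb; rewrite coprimeMl => /andP[aq_coprime bq_coprime].
apply/jacobi_reciprocal_sym/jacobi_reciprocalM => //.
  by apply/jacobi_reciprocal_sym/IHa.
by apply/jacobi_reciprocal_sym/IHb.
Qed.

Lemma jacobi_reciprocity m n : odd m -> odd n -> coprime m n ->
  jacobi m n * jacobi n m = (-1) ^+ (m./2 * n./2)%N.
Proof.
move=> m_odd n_odd; move: n n_odd m m_odd; apply: odd_prime_ind.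
- by move=> m m_odd _; apply: jacobi_reciprocal1.
- exact: jacobi_reciprocal_prime.
move=> a b a_odd b_odd IHa IHb m m_odd; rewrite coprimeMr => /andP[ma mb].
by apply: jacobi_reciprocalM => //; [exact: IHa | exact: IHb].
Qed.

Lemma cf_pair_det (a : nat -> int) x y k :
  (cf_pair a x k).1 * (cf_pair a y k).2 - (cf_pair a x k).2 * (cf_pair a y k).1
  = (-1) ^+ k * (x.1 * y.2 - x.2 * y.1).
Proof.
elim: k => [|k IHk] /=; first by rewrite mul1r.
by rewrite exprS -mulrA -IHk; ring.
Qed.

Lemma cf_det (a : nat -> int) k :
  cf_s a k.+1 * cf_t a k - cf_s a k * cf_t a k.+1 = (-1) ^+ k.
Proof.
have := cf_pair_det a (a 0%N, 1) (1, 0) k.+1; rewrite /cf_s /cf_t /= => ->.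
by rewrite mulr0 sub0r mulr1 mulrN1 exprS mulN1r opprK.
Qed.

Lemma cf_t_ge1 (a : nat -> int) : (forall i, (0 < i)%N -> 1 <= a i) ->
  forall k, 1 <= cf_t a k.
Proof.
move=> a_ge1 k; suff : 1 <= (cf_pair a (1, 0) k).1 /\ 0 <= (cf_pair a (1, 0) k).2.
  by case.
elim: k => [|k [IH1 IH2]] //=; split; last exact: le_trans IH1.
rewrite -[1]addr0 lerD // -[1]mulr1 ler_pM //; exact: a_ge1.
Qed.

Lemma unimodular_coprime (x y u v e : int) :
  e ^+ 2 = 1 -> u * x + v * y = e -> coprime `|x| `|y|.
Proof.
move=> e2 uxvy; rewrite -coprimezE; apply/coprimezP; exists (u * e, v * e) => /=.
by rewrite mulrAC [v * e * y]mulrAC -mulrDl uxvy -expr2.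
Qed.

Lemma jacobi_unimodular (s s' e : int) (T U : nat) : odd T -> odd U ->
  e ^+ 2 = 1 -> s' * T - s * U = e ->
  jacobi s T = jacobi (- e) T * jacobi e U * (-1) ^+ (T./2 * U./2) * jacobi s' U.
Proof.
move=> T_odd U_odd e2 det.
have TU_coprime : coprime T U.
  have := @unimodular_coprime T U s' (- s) e; rewrite !absz_nat; apply => //.
  by rewrite -det; ring.
have s'U_coprime : coprime `|s'| U.
  have := @unimodular_coprime s' U T (- s) e; rewrite absz_nat; apply => //.
  by rewrite -det; ring.
have modT : jacobi s T * jacobi U T = jacobi (- e) T.
  rewrite -jacobi_numM //; apply: jacobi_eqmod => //.
  by apply/dvdzP; exists s'; rewrite -det; ring.
have modU : jacobi s' U * jacobi T U = jacobi e U.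
  rewrite -jacobi_numM //; apply: jacobi_eqmod => //.
  by apply/dvdzP; exists s; rewrite -det; ring.
have UT2 : jacobi U T ^+ 2 = 1.
  by apply: jacobi_sqr; rewrite // absz_nat coprime_sym.
have TU2 : jacobi T U ^+ 2 = 1 by apply: jacobi_sqr; rewrite // absz_nat.
have s'U2 : jacobi s' U ^+ 2 = 1 by apply: jacobi_sqr.
rewrite -modT -modU -(jacobi_reciprocity T_odd U_odd TU_coprime).
transitivity (jacobi s T * jacobi U T ^+ 2 * jacobi T U ^+ 2 * jacobi s' U ^+ 2).
  by rewrite UT2 TU2 s'U2 !mulr1.
by ring.
Qed.

Lemma jacobi_num_sign n k : odd n -> jacobi ((-1) ^+ k) n = (-1) ^+ (odd k * n./2)%N.
Proof.
move=> n_odd; rewrite -signr_odd; case: (odd k); last by rewrite jacobi_num1.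
by rewrite mul1n jacobi_numN1.
Qed.

Lemma modz2_odd (n : nat) : (n%:Z %% 2)%Z = 1 -> odd n.
Proof. by rewrite modz_nat modn2; case: odd. Qed.

Lemma modz4_odd (n : nat) : odd n -> (n%:Z %% 4)%Z = if odd n./2 then 3 else 1.
Proof.
move=> /odd_halfE n_eq; rewrite modz_nat; have := odd_double_half n./2.
by rewrite -muln2; case: (odd n./2) => /= h; apply/eqP; rewrite eqz_nat; apply/eqP; lia.
Qed.

Theorem lemma1 (a : nat -> int) (ha : forall i : nat, (0 < i)%N -> 1 <= a i)
  (k : nat)
  (hk : (cf_t a k %% 2)%Z = 1) (hk1 : (cf_t a k.+1 %% 2)%Z = 1) :
  jacobi (cf_s a k) `|cf_t a k|%N =
  (if ((cf_t a k %% 4)%Z == 1) && ((cf_t a k.+1 %% 4)%Z == 3) && odd k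
      || ((cf_t a k %% 4)%Z == 3) && ((cf_t a k.+1 %% 4)%Z == 1) && ~~ odd k
   then -1 else 1) * jacobi (cf_s a k.+1) `|cf_t a k.+1|%N.
Proof.
have t_ge0 j : 0 <= cf_t a j by apply: le_trans (cf_t_ge1 ha j).
move: hk hk1 (cf_det a k).
rewrite -(gez0_abs (t_ge0 k)) -(gez0_abs (t_ge0 k.+1)) !absz_nat.
set T := `|cf_t a k|%N; set U := `|cf_t a k.+1|%N.
move=> /modz2_odd T_odd /modz2_odd U_odd det.
rewrite (jacobi_unimodular T_odd U_odd _ det) ?sqrr_sign //.
have -> : - (-1) ^+ k = (-1) ^+ k.+1 :> int by rewrite exprS mulN1r.
rewrite !jacobi_num_sign // (modz4_odd T_odd) (modz4_odd U_odd) -!exprD -signr_odd.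
congr (_ * _); rewrite !oddD !oddM /=.
by case: (odd k); case: (odd T./2); case: (odd U./2).
Qed.
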